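(* Let $m\ge2$ be even, $n\ge2$, and let $g,h\in\mathbb{R}$ with $h\neq0$ and $g/h\notin\mathbb{Z}$. Let $\mathcal{A}$ be the Cauchy-Hankel tensor of order $m$ and dimension $n$ with entries $a_{i_1\cdots i_m}=\frac{1}{g+h(i_1+\cdots+i_m)}$, $i_j\in\{1,\dots,n\}$. Then $\mathcal{A}$ is positive definite if and only if $g+mh>0$ and $g+nmh>0$.
   Context: A tensor $\mathcal{A}$ of even order $m$ is positive definite if $\mathcal{A}x^m=\sum_{i_1,\dots,i_m}a_{i_1\cdots i_m}x_{i_1}\cdots x_{i_m}>0$ for all nonzero $x\in\mathbb{R}^n$. *)

From Stdlib Require Import Reals ZArith Arith.
Open Scope R_scope.

Fixpoint sum1n (n : nat) (f : nat -> R) : R :=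
  match n with
  | O => 0
  | S k => sum1n k f + f (S k)
  end.

(* A real tensor of order m and dimension n: entries indexed by multi-indices
   (i_1,...,i_m), i_j in {1,...,n}, represented as lists [i_1; ...; i_m]. *)
Definition tensor := list nat -> R.

(* Partial homogeneous form: sum over the remaining k indices, given the
   already chosen prefix (reversed) and the product of the x's so far. *)
Fixpoint tform_aux (n : nat) (A : tensor) (x : nat -> R)
         (k : nat) (pre : list nat) (p : R) : R :=
  match k with
  | O => A (List.rev pre) * p
  | S k' => sum1n n (fun i => tform_aux n A x k' (i :: pre) (p * x i))
  end.

Definition tform (m n : nat) (A : tensor) (x : nat -> R) : R :=
  tform_aux n A x m nil 1.

Definition vec_nonzero (n : nat) (x : nat -> R) : Prop :=
  exists i, (1 <= i <= n)%nat /\ x i <> 0.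

Definition pos_def (m n : nat) (A : tensor) : Prop :=
  forall x : nat -> R, vec_nonzero n x -> tform m n A x > 0.

Definition cauchy_hankel (g h : R) : tensor :=
  fun idx => / (g + h * INR (List.fold_right Nat.add 0%nat idx)).

(* Write m = 2k and c u = 1 / (g + h u).  Since the entries of the tensor depend only on
   i_1 + ... + i_m, the form A x^m is the Hankel quadratic form
   sum_{s,t} c (2(k-1) + s + t) y_s y_t in the coefficients y of the polynomial
   (x_1 z + ... + x_n z^n)^k, and y is nonzero whenever x is (its lowest coefficient is a
   power of the first nonzero x_i).  With the nodes a_s = g/2 + h (k - 1 + s) this is the
   Cauchy form sum_{s,t} y_s y_t / (a_s + a_t); the nodes are distinct, and they are all
   positive exactly when the two endpoint conditions hold, in which case the Cauchy form
   is positive definite (peel off the last node, as in a Schur complement).  Conversely,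
   the unit vectors e_1 and e_n give A e_j^m = 1 / (g + j m h). *)

From Stdlib Require Import Reals ZArith Arith List Lra Lia.
Open Scope R_scope.

Lemma sum1n_S n f : sum1n (S n) f = sum1n n f + f (S n).
Proof. reflexivity. Qed.

Lemma sum1n_ext n f g :
  (forall i, (1 <= i <= n)%nat -> f i = g i) -> sum1n n f = sum1n n g.
Proof.
  induction n as [|n IH]; intros Hfg; [reflexivity|].
  rewrite !sum1n_S, IH, (Hfg (S n)); [reflexivity|lia|intros i Hi; apply Hfg; lia].
Qed.

Lemma sum1n_plus n f g : sum1n n (fun i => f i + g i) = sum1n n f + sum1n n g.
Proof. induction n as [|n IH]; simpl; [lra|]. rewrite IH; lra. Qed.

Lemma sum1n_mult_l n c f : sum1n n (fun i => c * f i) = c * sum1n n f.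
Proof. induction n as [|n IH]; simpl; [lra|]. rewrite IH; lra. Qed.

Lemma sum1n_mult_r n c f : sum1n n (fun i => f i * c) = sum1n n f * c.
Proof. induction n as [|n IH]; simpl; [lra|]. rewrite IH; lra. Qed.

Lemma sum1n_zero n f : (forall i, (1 <= i <= n)%nat -> f i = 0) -> sum1n n f = 0.
Proof.
  induction n as [|n IH]; intros Hf; [reflexivity|].
  rewrite sum1n_S, IH, (Hf (S n)); [lra|lia|intros i Hi; apply Hf; lia].
Qed.

Lemma sum1n_single n j f : (1 <= j <= n)%nat ->
  (forall i, (1 <= i <= n)%nat -> i <> j -> f i = 0) -> sum1n n f = f j.
Proof.
  induction n as [|n IH]; intros Hj Hf; [lia|]. rewrite sum1n_S.
  destruct (Nat.eq_dec j (S n)) as [->|Hne].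
  - rewrite sum1n_zero; [lra|]. intros i Hi; apply Hf; lia.
  - rewrite IH, (Hf (S n)) by (lia || intros i Hi Hij; apply Hf; lia). lra.
Qed.

Lemma sum1n_swap n N F :
  sum1n n (fun i => sum1n N (fun j => F i j)) = sum1n N (fun j => sum1n n (fun i => F i j)).
Proof.
  induction n as [|n IH]; simpl.
  - symmetry; apply sum1n_zero; reflexivity.
  - rewrite IH, sum1n_plus. reflexivity.
Qed.

Lemma sum1n_mult n f g :
  sum1n n f * sum1n n g = sum1n n (fun s => sum1n n (fun t => f s * g t)).
Proof.
  rewrite <- sum1n_mult_r. apply sum1n_ext; intros s _.
  rewrite <- sum1n_mult_l. reflexivity.
Qed.

Lemma vec_nonzero_dec n x : vec_nonzero n x \/ forall i, (1 <= i <= n)%nat -> x i = 0.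
Proof.
  induction n as [|n [[i [Hi Hxi]]|Hz]].
  - right; intros; lia.
  - left; exists i; split; [lia|exact Hxi].
  - destruct (Req_dec (x (S n)) 0) as [E|E].
    + right; intros i Hi. destruct (Nat.eq_dec i (S n)) as [->|]; [exact E|apply Hz; lia].
    + left; exists (S n); split; [lia|exact E].
Qed.

Lemma vec_nonzero_first n x : vec_nonzero n x ->
  exists i0, (1 <= i0 <= n)%nat /\ x i0 <> 0 /\ forall i, (1 <= i < i0)%nat -> x i = 0.
Proof.
  induction n as [|n IH]; intros [i [Hi Hxi]]; [lia|].
  destruct (vec_nonzero_dec n x) as [Hnz|Hz].
  - destruct (IH Hnz) as [i0 [Hi0 [Hx0 Hbelow]]]. exists i0; repeat split; auto; lia.
  - assert (i = S n) as ->.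
    { destruct (Nat.eq_dec i (S n)) as [|Hne]; [assumption|].
      exfalso; apply Hxi, Hz; lia. }
    exists (S n); repeat split; auto; try lia. intros j Hj; apply Hz; lia.
Qed.

Definition cauchy_form (N : nat) (a Y : nat -> R) : R :=
  sum1n N (fun s => sum1n N (fun t => Y s * Y t / (a s + a t))).

Lemma cauchy_form_zero N a Y :
  (forall s, (1 <= s <= N)%nat -> Y s = 0) -> cauchy_form N a Y = 0.
Proof.
  intros HY. apply sum1n_zero; intros s Hs. apply sum1n_zero; intros t _.
  rewrite (HY s Hs). unfold Rdiv; ring.
Qed.

Lemma cauchy_form_S_last0 N a Y : Y (S N) = 0 -> cauchy_form (S N) a Y = cauchy_form N a Y.
Proof.
  intros HY. unfold cauchy_form. rewrite sum1n_S; cbv beta. rewrite (sum1n_zero (S N)).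
  - rewrite Rplus_0_r. apply sum1n_ext; intros s _. rewrite sum1n_S, HY. unfold Rdiv; ring.
  - intros t _. rewrite HY. unfold Rdiv; ring.
Qed.

(* Schur complement of the last node b: 1/(a + a') = 2b / ((b + a)(b + a'))
   + (a - b)(a' - b) / ((a + a')(a + b)(a' + b)), and the second kernel vanishes at b. *)
Lemma cauchy_form_S N a Y : (forall s, (1 <= s <= S N)%nat -> a s > 0) ->
  cauchy_form (S N) a Y =
    Rsqr (sum1n (S N) (fun s => Y s * (2 * a (S N) / (a (S N) + a s)))) / (2 * a (S N))
    + cauchy_form N a (fun s => Y s * ((a s - a (S N)) / (a s + a (S N)))).
Proof.
  intros Ha. set (b := a (S N)).
  rewrite <- (cauchy_form_S_last0 N a (fun s => Y s * ((a s - b) / (a s + b))))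
    by (cbv beta; unfold b, Rdiv; rewrite Rminus_diag; ring).
  unfold Rsqr, cauchy_form. rewrite sum1n_mult. unfold Rdiv.
  rewrite <- sum1n_mult_r, <- sum1n_plus. apply sum1n_ext; intros s Hs.
  rewrite <- sum1n_mult_r, <- sum1n_plus. apply sum1n_ext; intros t Ht.
  assert (a s > 0) by (apply Ha; lia). assert (a t > 0) by (apply Ha; lia).
  assert (b > 0) by (apply Ha; lia).
  field; repeat split; lra.
Qed.

Lemma cauchy_form_pos N a Y :
  (forall s, (1 <= s <= N)%nat -> a s > 0) ->
  (forall s t, (1 <= s <= N)%nat -> (1 <= t <= N)%nat -> a s = a t -> s = t) ->
  vec_nonzero N Y -> cauchy_form N a Y > 0.
Proof.
  revert Y. induction N as [|N IH]; intros Y Ha Hinj HY.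
  { destruct HY as [s [Hs _]]; lia. }
  assert (Hb : a (S N) > 0) by (apply Ha; lia).
  rewrite cauchy_form_S by exact Ha.
  set (L := sum1n (S N) _).
  assert (HL : 0 <= Rsqr L / (2 * a (S N))).
  { unfold Rdiv. apply Rmult_le_pos; [apply Rle_0_sqr|left; apply Rinv_0_lt_compat; lra]. }
  destruct (vec_nonzero_dec N Y) as [[s [Hs HYs]]|HY0].
  - enough (cauchy_form N a (fun s => Y s * ((a s - a (S N)) / (a s + a (S N)))) > 0)
      by lra.
    assert (Has : a s > 0) by (apply Ha; lia).
    assert (Hne : a s <> a (S N))
      by (intro E; specialize (Hinj s (S N) ltac:(lia) ltac:(lia) E); lia).
    apply IH.
    + intros t Ht; apply Ha; lia.
    + intros t u Ht Hu; apply Hinj; lia.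
    + exists s; split; [exact Hs|].
      apply Rmult_integral_contrapositive_currified; [exact HYs|].
      unfold Rdiv; apply Rmult_integral_contrapositive_currified;
        [lra|apply Rinv_neq_0_compat; lra].
  - rewrite cauchy_form_zero by (intros s Hs; rewrite HY0 by exact Hs; ring).
    assert (HYN : Y (S N) <> 0).
    { destruct HY as [s [Hs HYs]]. destruct (Nat.eq_dec s (S N)) as [<-|]; [exact HYs|].
      exfalso; apply HYs, HY0; lia. }
    assert (HLY : L = Y (S N)).
    { unfold L. rewrite sum1n_S, sum1n_zero by (intros i Hi; rewrite HY0 by lia; ring).
      field; lra. }
    rewrite HLY. pose proof (Rdiv_lt_0_compat _ (2 * a (S N)) (Rlt_0_sqr _ HYN)). lra.
Qed.

Lemma list_sum_rev l : list_sum (rev l) = list_sum l.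
Proof.
  induction l as [|i l IH]; [reflexivity|].
  simpl. rewrite list_sum_app, IH. simpl. lia.
Qed.

Section HankelForm.
Variables (n : nat) (x : nat -> R).

Fixpoint hankel_form (k : nat) (c : nat -> R) (s0 : nat) : R :=
  match k with
  | O => c s0
  | S k' => sum1n n (fun i => x i * hankel_form k' c (s0 + i)%nat)
  end.

Lemma tform_aux_hankel c k : forall pre p,
  tform_aux n (fun l => c (list_sum l)) x k pre p = p * hankel_form k c (list_sum pre).
Proof.
  induction k as [|k IH]; intros pre p; simpl.
  - change (fold_right Nat.add 0%nat (rev pre)) with (list_sum (rev pre)).
    rewrite list_sum_rev. ring.
  - rewrite <- sum1n_mult_l. apply sum1n_ext; intros i _. rewrite IH.
    replace (list_sum (i :: pre)) with (list_sum pre + i)%nat by (simpl; lia). ring.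
Qed.

Lemma hankel_form_add k l c s0 :
  hankel_form (k + l) c s0 = hankel_form k (hankel_form l c) s0.
Proof.
  revert s0; induction k as [|k IH]; intros s0; simpl; [reflexivity|].
  apply sum1n_ext; intros i _. rewrite IH. reflexivity.
Qed.

Lemma hankel_form_ext k c c' s0 :
  (forall u, (s0 + k <= u <= s0 + k * n)%nat -> c u = c' u) ->
  hankel_form k c s0 = hankel_form k c' s0.
Proof.
  revert s0; induction k as [|k IH]; intros s0 Hc; simpl; [apply Hc; lia|].
  apply sum1n_ext; intros i Hi. f_equal. apply IH. intros u Hu. apply Hc. nia.
Qed.

Lemma hankel_form_shift k c s0 d :
  hankel_form k c (s0 + d) = hankel_form k (fun u => c (u + d)%nat) s0.
Proof.
  revert s0; induction k as [|k IH]; intros s0; simpl; [reflexivity|].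
  apply sum1n_ext; intros i _.
  replace (s0 + d + i)%nat with (s0 + i + d)%nat by lia. rewrite IH. reflexivity.
Qed.

Lemma hankel_form_sum k N w F s0 :
  hankel_form k (fun u => sum1n N (fun s => w s * F s u)) s0
  = sum1n N (fun s => w s * hankel_form k (F s) s0).
Proof.
  revert s0; induction k as [|k IH]; intros s0; simpl; [reflexivity|].
  transitivity
    (sum1n n (fun i => sum1n N (fun s => w s * (x i * hankel_form k (F s) (s0 + i)%nat)))).
  { apply sum1n_ext; intros i _. rewrite IH, <- sum1n_mult_l. apply sum1n_ext; intros; ring. }
  rewrite sum1n_swap. apply sum1n_ext; intros s _. rewrite sum1n_mult_l. reflexivity.
Qed.

(* The coefficient of z^(k-1+s) in (x_1 z + ... + x_n z^n)^k; only s in 1..k(n-1)+1 matter. *)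
Definition hankel_coef (k s : nat) : R :=
  hankel_form k (fun u => if Nat.eqb u (k - 1 + s) then 1 else 0) 0.

Lemma hankel_form_coef k c s0 : (1 <= k)%nat -> (1 <= n)%nat ->
  hankel_form k c s0
  = sum1n (k * (n - 1) + 1) (fun s => c (s0 + (k - 1 + s))%nat * hankel_coef k s).
Proof.
  intros Hk Hn.
  set (delta := fun s u => if Nat.eqb u (s0 + (k - 1 + s)) then 1 else 0).
  rewrite (hankel_form_ext k c
    (fun u => sum1n (k * (n - 1) + 1) (fun s => c (s0 + (k - 1 + s))%nat * delta s u))).
  - rewrite hankel_form_sum. apply sum1n_ext; intros s _. f_equal.
    unfold hankel_coef. rewrite <- (Nat.add_0_l s0) at 1. rewrite hankel_form_shift.
    apply hankel_form_ext; intros u _. unfold delta.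
    destruct (Nat.eqb_spec (u + s0) (s0 + (k - 1 + s))), (Nat.eqb_spec u (k - 1 + s));
      (lia || reflexivity).
  - intros u Hu. rewrite (sum1n_single _ (u - s0 - (k - 1))); unfold delta.
    + replace (s0 + (k - 1 + (u - s0 - (k - 1))))%nat with u by lia.
      rewrite Nat.eqb_refl. ring.
    + nia.
    + intros i _ Hne. destruct (Nat.eqb_spec u (s0 + (k - 1 + i))); [lia|ring].
Qed.

Section LowestCoefficient.
Variable i0 : nat.
Hypothesis Hbelow : forall i, (1 <= i < i0)%nat -> x i = 0.
Hypothesis Hi0 : (1 <= i0 <= n)%nat.

Lemma hankel_form_delta_below k s0 T : (T < s0 + k * i0)%nat ->
  hankel_form k (fun u => if Nat.eqb u T then 1 else 0) s0 = 0.
Proof.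
  revert s0; induction k as [|k IH]; intros s0 HT; simpl.
  - destruct (Nat.eqb_spec s0 T); [lia|reflexivity].
  - apply sum1n_zero; intros i Hi. destruct (Nat.lt_ge_cases i i0).
    + rewrite Hbelow by lia; ring.
    + rewrite IH by nia; ring.
Qed.

Lemma hankel_form_delta_lowest k s0 :
  hankel_form k (fun u => if Nat.eqb u (s0 + k * i0) then 1 else 0) s0 = x i0 ^ k.
Proof.
  revert s0; induction k as [|k IH]; intros s0; cbn [hankel_form].
  - rewrite Nat.mul_0_l, Nat.add_0_r, Nat.eqb_refl. reflexivity.
  - rewrite (sum1n_single n i0 _ Hi0).
    + replace (s0 + S k * i0)%nat with (s0 + i0 + k * i0)%nat by lia. rewrite IH. reflexivity.
    + intros i Hi Hne. destruct (Nat.lt_ge_cases i i0).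
      * rewrite Hbelow by lia; ring.
      * rewrite hankel_form_delta_below by nia; ring.
Qed.

End LowestCoefficient.

Lemma hankel_coef_nonzero k : (1 <= k)%nat ->
  vec_nonzero n x -> vec_nonzero (k * (n - 1) + 1) (hankel_coef k).
Proof.
  intros Hk Hx. destruct (vec_nonzero_first n x Hx) as [i0 [Hi0 [Hxi0 Hbelow]]].
  exists (k * (i0 - 1) + 1)%nat. split; [nia|].
  unfold hankel_coef. replace (k - 1 + (k * (i0 - 1) + 1))%nat with (0 + k * i0)%nat by nia.
  rewrite (hankel_form_delta_lowest i0 Hbelow Hi0). apply pow_nonzero, Hxi0.
Qed.

End HankelForm.

Lemma hankel_form_unit n j k c s0 : (1 <= j <= n)%nat ->
  hankel_form n (fun i => if Nat.eqb i j then 1 else 0) k c s0 = c (s0 + k * j)%nat.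
Proof.
  intros Hj. revert s0; induction k as [|k IH]; intros s0; simpl.
  - rewrite Nat.add_0_r. reflexivity.
  - rewrite (sum1n_single n j _ Hj).
    + rewrite IH, Nat.eqb_refl, Rmult_1_l. f_equal; lia.
    + intros i _ Hne. destruct (Nat.eqb_spec i j); [lia|ring].
Qed.

Lemma tform_cauchy_hankel m n g h x :
  tform m n (cauchy_hankel g h) x = hankel_form n x m (fun u => / (g + h * INR u)) 0.
Proof.
  unfold tform. rewrite <- (Rmult_1_l (hankel_form _ _ _ _ _)).
  exact (tform_aux_hankel n x (fun u => / (g + h * INR u)) m nil 1).
Qed.

Lemma tform_cauchy_hankel_even k n g h x : (1 <= k)%nat -> (1 <= n)%nat ->
  tform (k + k) n (cauchy_hankel g h) x
  = cauchy_form (k * (n - 1) + 1) (fun s => g / 2 + h * INR (k - 1 + s)) (hankel_coef n x k).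
Proof.
  intros Hk Hn. rewrite tform_cauchy_hankel, hankel_form_add, hankel_form_coef by assumption.
  apply sum1n_ext; intros s _. rewrite hankel_form_coef by assumption.
  rewrite Rmult_comm, <- sum1n_mult_l. apply sum1n_ext; intros t _.
  replace (INR (0 + (k - 1 + s) + (k - 1 + t))) with (INR (k - 1 + s) + INR (k - 1 + t))
    by (rewrite <- plus_INR; f_equal; lia).
  replace (g / 2 + h * INR (k - 1 + s) + (g / 2 + h * INR (k - 1 + t)))
    with (g + h * (INR (k - 1 + s) + INR (k - 1 + t))) by field.
  unfold Rdiv; ring.
Qed.

Lemma pos_def_cauchy_hankel_unit m n g h j : (1 <= j <= n)%nat ->
  pos_def m n (cauchy_hankel g h) -> g + INR j * INR m * h > 0.
Proof.
  intros Hj Hpd.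
  assert (He : vec_nonzero n (fun i => if Nat.eqb i j then 1 else 0)).
  { exists j; split; [exact Hj|]. rewrite Nat.eqb_refl. lra. }
  specialize (Hpd _ He).
  rewrite tform_cauchy_hankel, hankel_form_unit, Nat.add_0_l, mult_INR in Hpd by exact Hj.
  replace (g + INR j * INR m * h) with (g + h * (INR m * INR j)) by ring.
  destruct (Rtotal_order (g + h * (INR m * INR j)) 0) as [Hlt|[Heq|Hgt]].
  - apply Rinv_lt_0_compat in Hlt. lra.
  - rewrite Heq, Rinv_0 in Hpd. lra.
  - exact Hgt.
Qed.

Lemma cauchy_hankel_nodes_pos k n g h s : (1 <= k)%nat -> (1 <= n)%nat ->
  g + INR (2 * k) * h > 0 -> g + INR n * INR (2 * k) * h > 0 ->
  (1 <= s <= k * (n - 1) + 1)%nat -> g / 2 + h * INR (k - 1 + s) > 0.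
Proof.
  intros Hk Hn H1 H2 Hs. rewrite mult_INR in H1, H2. simpl (INR 2) in H1, H2.
  assert (Hlo : INR k <= INR (k - 1 + s)) by (apply le_INR; lia).
  assert (Hhi : INR (k - 1 + s) <= INR k * INR n) by (rewrite <- mult_INR; apply le_INR; nia).
  destruct (Rle_lt_dec 0 h).
  - assert (0 <= h * (INR (k - 1 + s) - INR k)) by (apply Rmult_le_pos; lra). nra.
  - assert (0 <= (- h) * (INR k * INR n - INR (k - 1 + s))) by (apply Rmult_le_pos; lra). nra.
Qed.

Theorem theorem5p1 (m n : nat) (g h : R)
  (Hm : (2 <= m)%nat) (Hev : Nat.Even m) (Hn : (2 <= n)%nat)
  (Hh : h <> 0) (Hgh : forall z : Z, g / h <> IZR z) :
  pos_def m n (cauchy_hankel g h) <->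
  (g + INR m * h > 0 /\ g + INR n * INR m * h > 0).
Proof.
  split.
  - intros Hpd. split.
    + rewrite <- (Rmult_1_l (INR m)). exact (pos_def_cauchy_hankel_unit m n g h 1 ltac:(lia) Hpd).
    + exact (pos_def_cauchy_hankel_unit m n g h n ltac:(lia) Hpd).
  - intros [H1 H2] x Hx. destruct Hev as [k ->].
    replace (2 * k)%nat with (k + k)%nat by lia.
    rewrite tform_cauchy_hankel_even by lia.
    apply cauchy_form_pos.
    + intros s Hs. apply (cauchy_hankel_nodes_pos k n g h s); (assumption || lia).
    + intros s t _ _ E.
      assert (E' : h * INR (k - 1 + s) = h * INR (k - 1 + t)) by lra.
      apply Rmult_eq_reg_l, INR_eq in E'; [lia|exact Hh].
    + apply hankel_coef_nonzero; [lia|exact Hx].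
Qed.
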